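(* Let $\Delta'$, $\Delta''$ be edges (1-cells) of $\tilde K_b(\mathcal P,w)$. Then $\Delta'$ and $\Delta''$ are simple square equivalent if and only if either there is a maximal shaded transistor $T$ of $\Delta'$ such that $\Delta''$ is obtained from $\Delta'$ by removing $T$ and all of its bottom wires, or the same holds with the roles of $\Delta'$ and $\Delta''$ exchanged.
   Context: $\mathcal P=\langle\Sigma\mid\mathcal R\rangle$ is a semigroup presentation (no relation $(u,u)$), $w\in\Sigma^+$. Pictures over $\mathcal P$: frame, transistors and $\Sigma$-labelled wires, each wire from the bottom of a transistor or top of the frame to the top of a transistor or bottom of the frame, contacts ordered left to right, ''$T_1<T_2$ if a wire runs from the bottom of $T_1$ to the top of $T_2$'' generating a strict partial order, and each transistor's top/bottom words forming a relation of $\mathcal R$. Reduced: no dipole (pair $T_1<T_2$ with bottom contacts of $T_1$ joined in order to top contacts of $T_2$ and top label of $T_1$ = bottom label of $T_2$). $\tilde K_b(\mathcal P,w)$: vertices are reduced $(w,* )$-pictures modulo concatenation below by transistor-free pictures; an $n$-cube is such a picture with $n$ maximal transistors marked white (the other transistors are called shaded), its vertices obtained by keeping or deleting each white transistor together with its bottom wires; cubes glued along faces with equal labels. Thus an edge is a picture with exactly one white transistor. Two edges are simple square equivalent if they are opposite sides of a square (2-cube). *)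

From Stdlib Require Import Relations.Relation_Operators.
From mathcomp Require Import all_boot.
Set Implicit Arguments. Unset Strict Implicit. Unset Printing Implicit Defensive.

(** Contacts are encoded as pairs [(option nat * nat)]:
    - a wire SOURCE is [(None, i)] = i-th contact (from the left) on the top
      of the frame, or [(Some t, j)] = j-th bottom contact of transistor t;
    - a wire TARGET is [(Some t, k)] = k-th top contact of transistor t,
      or [(None, i)] = i-th contact on the bottom of the frame.
    Since every contact carries exactly one wire, a wire is identified with
    its source, and the wiring is a function [wire : source -> target]. *)
Definition contact := (option nat * nat)%type.

Record pic (S : Type) := Pic {
  nT   : nat;
  ttop : nat -> seq S;
  tbot : nat -> seq S;
  vbot : seq S;             (* bottom label of the frame *)
  wire : contact -> contact
}.

Section Pictures.
Variable S : Type.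
Variable R : seq S -> seq S -> Prop.
Variable w : seq S.                    (* top label of the frame *)

Definition valid_src (P : pic S) (s : contact) : Prop :=
  match s with
  | (None, i) => i < size w
  | (Some t, j) => t < nT P /\ j < size (tbot P t)
  end.

Definition valid_tgt (P : pic S) (s : contact) : Prop :=
  match s with
  | (None, i) => i < size (vbot P)
  | (Some t, k) => t < nT P /\ k < size (ttop P t)
  end.

Definition lab_src (P : pic S) (s : contact) : option S :=
  match s with
  | (None, i) => onth w i
  | (Some t, j) => onth (tbot P t) j
  end.

Definition lab_tgt (P : pic S) (s : contact) : option S :=
  match s with
  | (None, i) => onth (vbot P) i
  | (Some t, k) => onth (ttop P t) k
  end.

Definition tlt (P : pic S) (t1 t2 : nat) : Prop :=
  t1 < nT P /\ t2 < nT P /\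
  exists j k, j < size (tbot P t1) /\ wire P (Some t1, j) = (Some t2, k).

Definition is_picture (P : pic S) : Prop :=
  (forall s, valid_src P s -> valid_tgt P (wire P s)) /\
  (forall s1 s2, valid_src P s1 -> valid_src P s2 ->
     wire P s1 = wire P s2 -> s1 = s2) /\
  (forall c, valid_tgt P c -> exists s, valid_src P s /\ wire P s = c) /\
  (forall s, valid_src P s -> lab_src P s = lab_tgt P (wire P s)) /\
  (forall t, t < nT P -> R (ttop P t) (tbot P t) \/ R (tbot P t) (ttop P t)) /\
  (forall t, ~ clos_trans nat (tlt P) t t).

Definition dipole (P : pic S) (t1 t2 : nat) : Prop :=
  tlt P t1 t2 /\
  size (tbot P t1) = size (ttop P t2) /\
  (forall j, j < size (tbot P t1) -> wire P (Some t1, j) = (Some t2, j)) /\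
  ttop P t1 = tbot P t2.

Definition reduced (P : pic S) : Prop := forall t1 t2, ~ dipole P t1 t2.

Definition maximal (P : pic S) (t : nat) : Prop :=
  t < nT P /\ forall t', ~ tlt P t t'.

(** Isomorphism of (w, _)-pictures up to concatenation below by a
    transistor-free picture (i.e. a permutation [pi] of the bottom contacts
    of the frame); [sigma] is the bijection between transistors. *)
Definition map_src (sigma : nat -> nat) (s : contact) : contact :=
  match s with
  | (None, i) => (None, i)
  | (Some t, j) => (Some (sigma t), j)
  end.

Definition map_tgt (sigma pi : nat -> nat) (c : contact) : contact :=
  match c with
  | (Some t, k) => (Some (sigma t), k)
  | (None, i) => (None, pi i)
  end.

Definition pic_iso (P Q : pic S) (sigma pi : nat -> nat) : Prop :=
  nT P = nT Q /\
  (forall t, t < nT P -> sigma t < nT Q) /\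
  (forall t1 t2, t1 < nT P -> t2 < nT P -> sigma t1 = sigma t2 -> t1 = t2) /\
  (forall t', t' < nT Q -> exists t, t < nT P /\ sigma t = t') /\
  size (vbot P) = size (vbot Q) /\
  (forall i, i < size (vbot P) -> pi i < size (vbot Q)) /\
  (forall i1 i2, i1 < size (vbot P) -> i2 < size (vbot P) ->
     pi i1 = pi i2 -> i1 = i2) /\
  (forall i', i' < size (vbot Q) -> exists i, i < size (vbot P) /\ pi i = i') /\
  (forall t, t < nT P -> ttop Q (sigma t) = ttop P t /\ tbot Q (sigma t) = tbot P t) /\
  (forall s, valid_src P s -> wire Q (map_src sigma s) = map_tgt sigma pi (wire P s)).

(** Removing a (maximal) transistor T together with its bottom wires: the
    wires arriving at the top of T now end on the bottom of the frame
    (placed, say, to the right; the position is irrelevant up to the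
    equivalence above); transistors are renumbered by [bump]/[unbump]. *)
Definition remove_tr (P : pic S) (T : nat) : pic S :=
  let keep i := ~~ has (fun j => wire P (Some T, j) == (None, i))
                       (iota 0 (size (tbot P T))) in
  let kmask := [seq keep i | i <- iota 0 (size (vbot P))] in
  let m := count id kmask in
  {| nT := (nT P).-1;
     ttop := fun t => ttop P (bump T t);
     tbot := fun t => tbot P (bump T t);
     vbot := mask kmask (vbot P) ++ ttop P T;
     wire := fun s =>
       let s0 := match s with
                 | (None, i) => (None, i)
                 | (Some t, j) => (Some (bump T t), j)
                 end in
       match wire P s0 with
       | (Some t, k) => if t == T then (None, m + k) else (Some (unbump T t), k)
       | (None, i) => (None, count keep (iota 0 i))
       end |}.

(** Edges (1-cells) of K_b(P,w): reduced (w, _)-pictures with exactly one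
    (maximal) transistor marked white, up to equivalence. *)
Definition is_edge (E : pic S * nat) : Prop :=
  is_picture E.1 /\ reduced E.1 /\ maximal E.1 E.2.

Definition edge_equiv (E F : pic S * nat) : Prop :=
  exists sigma pi, pic_iso E.1 F.1 sigma pi /\ sigma E.2 = F.2.

(** Squares (2-cubes): reduced (w, _)-pictures with two distinct maximal
    transistors W1, W2 marked white.  Its four sides are obtained by keeping
    (as shaded) or deleting one of the white transistors. *)
Definition is_square (P : pic S) (W1 W2 : nat) : Prop :=
  is_picture P /\ reduced P /\ maximal P W1 /\ maximal P W2 /\ W1 <> W2.

(** Two edges are simple square equivalent if they are (equivalent to)
    opposite sides of a square: the side where W2 is kept (shaded) and the
    side where W2 is deleted, W1 being white in both.  (The other pair of
    opposite sides is covered by exchanging W1 and W2.) *)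
Definition sq_equiv (E F : pic S * nat) : Prop :=
  exists P W1 W2, is_square P W1 W2 /\
    ((edge_equiv E (P, W1) /\ edge_equiv F (remove_tr P W2, unbump W2 W1)) \/
     (edge_equiv F (P, W1) /\ edge_equiv E (remove_tr P W2, unbump W2 W1))).

End Pictures.

(* A square with white transistors W1, W2 has (P, W1) and (P minus W2, W1) as
   a pair of opposite sides.  An isomorphism of E' with (P, W1) carries W2 to a
   maximal shaded transistor T of E', and removing a transistor commutes with
   isomorphisms of pictures, so E'' is equivalent to E' minus T.  Conversely,
   marking T white as well turns E' into a square whose opposite sides are E'
   and E' minus T. *)

From Stdlib Require Import Relations.Relation_Operators.
From mathcomp Require Import all_boot zify.
Set Implicit Arguments. Unset Strict Implicit. Unset Printing Implicit Defensive.

Section RankSelect.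
Implicit Types (a b : pred nat).

Definition rank a i := count a (iota 0 i).
Definition select a n j := nth 0 [seq i <- iota 0 n | a i] j.

Lemma iota0_split i n : i < n -> iota 0 n = iota 0 i ++ i :: iota i.+1 (n - i.+1).
Proof.
move=> lt_in; have -> : n = i + (n - i.+1).+1 by lia.
by rewrite iotaD /= add0n; congr (_ ++ _ :: iota _ _); lia.
Qed.

Lemma rank_lt a i n : a i -> i < n -> rank a i < rank a n.
Proof. by move=> ai lt_in; rewrite /rank (iota0_split lt_in) count_cat /= ai; lia. Qed.

Lemma select_rank a i n : a i -> i < n -> select a n (rank a i) = i.
Proof.
move=> ai lt_in; rewrite /select (iota0_split lt_in) filter_cat /= ai.
by rewrite nth_cat size_filter /rank ltnn subnn.
Qed.

Lemma select_spec a n j : j < rank a n ->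
  [/\ a (select a n j), select a n j < n & rank a (select a n j) = j].
Proof.
move=> lt_jr.
have lt_js : j < size [seq i <- iota 0 n | a i] by rewrite size_filter.
have /andP[a_sel lt_sel] : a (select a n j) && (select a n j < n).
  by have := mem_nth 0 lt_js; rewrite mem_filter mem_iota.
split=> //; apply/eqP.
have uniq_s : uniq [seq i <- iota 0 n | a i] by rewrite filter_uniq ?iota_uniq.
rewrite -(nth_uniq 0 _ lt_js uniq_s); last by rewrite size_filter rank_lt.
by have := select_rank a_sel lt_sel; rewrite /select => ->.
Qed.

End RankSelect.

Section BijectionsOnRanges.
Implicit Types (f g pi : nat -> nat) (a b : pred nat).

Definition bij_on n m f : Prop :=
  [/\ forall x, x < n -> f x < m,
      forall x y, x < n -> y < n -> f x = f y -> x = y &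
      forall y, y < m -> exists x, x < n /\ f x = y].

Lemma bij_on_id n : bij_on n n id.
Proof. by split=> // y lt_yn; exists y. Qed.

Lemma bij_on_comp n m p f g : bij_on n m f -> bij_on m p g -> bij_on n p (g \o f).
Proof.
case=> f_into f_inj f_onto [g_into g_inj g_onto].
split=> [x lt_xn | x y lt_xn lt_yn | z lt_zp] /=.
- exact/g_into/f_into.
- by move/g_inj => fxy; apply: f_inj => //; apply: fxy; apply: f_into.
- have [y [lt_ym <-]] := g_onto z lt_zp; have [x [lt_xn <-]] := f_onto y lt_ym.
  by exists x.
Qed.

Definition inv_on f n y := find (fun x => f x == y) (iota 0 n).

Lemma inv_onK n m f x : bij_on n m f -> x < n -> inv_on f n (f x) = x.
Proof.
case=> _ f_inj _ lt_xn.
have has_x : has (fun z => f z == f x) (iota 0 n).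
  by apply/hasP; exists x; rewrite ?mem_iota.
have := has_x; rewrite has_find size_iota => lt_find.
by apply: f_inj => //; have := nth_find 0 has_x; rewrite nth_iota // add0n => /eqP.
Qed.

Lemma inv_onKV n m f y : bij_on n m f -> y < m -> f (inv_on f n y) = y.
Proof.
by move=> bij; case: (bij) => _ _ f_onto /f_onto [x [lt_xn <-]]; rewrite (inv_onK bij).
Qed.

Lemma bij_on_inv n m f : bij_on n m f -> bij_on m n (inv_on f n).
Proof.
move=> bij; case: (bij) => f_into _ f_onto.
split=> [y /f_onto [x [lt_xn <-]] | y z lt_ym lt_zm e | x lt_xn].
- by rewrite (inv_onK bij).
- by rewrite -(inv_onKV bij lt_ym) e (inv_onKV bij lt_zm).
- by exists (f x); rewrite (inv_onK bij) ?f_into.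
Qed.

Lemma bump_lt h t n : h < n -> t < n.-1 -> bump h t < n.
Proof. by move=> ? ?; rewrite /bump; case: (leqP h t) => /=; lia. Qed.

Lemma unbump_lt h x n : h < n -> x < n -> x != h -> unbump h x < n.-1.
Proof. by move=> ? ? /eqP ?; rewrite /unbump; case: (ltnP h x) => /=; lia. Qed.

Lemma bij_on_unbump n m f T : bij_on n m f -> T < n ->
  bij_on n.-1 m.-1 (fun u => unbump (f T) (f (bump T u))).
Proof.
case=> f_into f_inj f_onto lt_Tn; have lt_fTm := f_into T lt_Tn.
have fT_eq u : u < n.-1 -> (f (bump T u) == f T) = false.
  move=> lt_u; apply/eqP=> /f_inj e; move: (neq_bump T u).
  by rewrite e ?eqxx //; apply: bump_lt.
split=> [u lt_u | u v lt_u lt_v | y lt_y].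
- by apply: unbump_lt (f_into _ _) _; rewrite ?fT_eq ?bump_lt.
- move/(congr1 (bump (f T))); rewrite !unbumpKcond !fT_eq // !add0n.
  move/f_inj => e; rewrite -(bumpK T u) -(bumpK T v) e // bump_lt //.
- have [x [lt_xn fx]] := f_onto (bump (f T) y) (bump_lt lt_fTm lt_y).
  have x_neq_T : x != T.
    by apply/eqP=> xT; move: (neq_bump (f T) y); rewrite -fx xT eqxx.
  exists (unbump T x); split; first exact: unbump_lt.
  by rewrite unbumpK ?inE // fx bumpK.
Qed.

Section Compress.
Variables (n m : nat) (pi : nat -> nat) (a b : pred nat).
Hypothesis bij_pi : bij_on n m pi.
Hypothesis pi_ab : forall i, i < n -> b (pi i) = a i.

Lemma rank_bij : rank b m = rank a n.
Proof.
case: bij_pi => pi_into pi_inj pi_onto.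
have perm_pi : perm_eq (map pi (iota 0 n)) (iota 0 m).
  apply: uniq_perm; rewrite ?iota_uniq //.
    by rewrite map_inj_in_uniq ?iota_uniq // => x y; rewrite !mem_iota; apply: pi_inj.
  move=> y; rewrite mem_iota; apply/mapP/idP => [[x] | lt_ym].
    by rewrite mem_iota => lt_xn ->; apply: pi_into.
  by have [x [lt_xn <-]] := pi_onto y lt_ym; exists x; rewrite ?mem_iota.
rewrite /rank -(permP perm_pi) count_map; apply: eq_in_count => i.
by rewrite mem_iota => lt_in; apply: pi_ab.
Qed.

(* The bottom of the frame of [remove_tr P T] lists the contacts kept from P,
   renumbered by rank, followed by the top contacts of T; [compress] is the
   bijection that [pi] induces on this layout. *)
Definition compress j := if j < rank a n then rank b (pi (select a n j)) else j.

Lemma compress_low j : j < rank a n -> compress j < rank a n.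
Proof.
rewrite /compress => lt_j; rewrite lt_j; have [a_sel lt_sel _] := select_spec lt_j.
by case: bij_pi => pi_into _ _; rewrite -rank_bij rank_lt ?pi_ab ?pi_into.
Qed.

Lemma compress_high j : rank a n <= j -> compress j = j.
Proof. by rewrite /compress ltnNge => ->. Qed.

Lemma bij_on_compress k : bij_on (rank a n + k) (rank b m + k) compress.
Proof.
rewrite rank_bij; case: (bij_pi) => pi_into pi_inj pi_onto.
split=> [j lt_j | j1 j2 lt_j1 lt_j2 | y lt_y].
- case: (ltnP j (rank a n)) => [/compress_low | /compress_high ->]; lia.
- case: (ltnP j1 (rank a n)) => [l1 | h1]; case: (ltnP j2 (rank a n)) => [l2 | h2] e.
  + have [a1 lt1 <-] := select_spec l1; have [a2 lt2 <-] := select_spec l2.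
    move: e; rewrite /compress l1 l2 => /(congr1 (select b m)).
    by rewrite !select_rank ?pi_ab ?pi_into // => /pi_inj ->.
  + by have := compress_low l1; rewrite e compress_high //; lia.
  + by have := compress_low l2; rewrite -e compress_high //; lia.
  + by rewrite -(compress_high h1) e compress_high.
- case: (ltnP y (rank a n)) => [lt_yr | ge_yr]; last by exists y; rewrite compress_high.
  have lt_yb : y < rank b m by rewrite rank_bij.
  have [b_sel lt_sel rank_sel] := select_spec lt_yb.
  have [x [lt_xn pix]] := pi_onto _ lt_sel.
  have a_x : a x by rewrite -pi_ab // pix.
  exists (rank a x); split; first by have := rank_lt a_x lt_xn; lia.
  by rewrite /compress rank_lt // select_rank // pix.
Qed.

End Compress.
End BijectionsOnRanges.

Section PictureIsomorphisms.
Variables (S : Type) (R : seq S -> seq S -> Prop) (w : seq S).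
Implicit Types (P Q : pic S) (sg pi : nat -> nat) (s : contact).

Record pic_iso_spec P Q sg pi : Prop := PicIsoSpec {
  iso_nT : nT P = nT Q;
  iso_tr : bij_on (nT P) (nT Q) sg;
  iso_size : size (vbot P) = size (vbot Q);
  iso_bot : bij_on (size (vbot P)) (size (vbot Q)) pi;
  iso_labels : forall t, t < nT P -> ttop Q (sg t) = ttop P t /\ tbot Q (sg t) = tbot P t;
  iso_wire : forall s, valid_src w P s -> wire Q (map_src sg s) = map_tgt sg pi (wire P s)
}.

Lemma pic_isoP P Q sg pi : pic_iso w P Q sg pi <-> pic_iso_spec P Q sg pi.
Proof.
split=> [[? [? [? [? [? [? [? [? [? ?]]]]]]]]] | [? [? ? ?] ? [? ? ?] ? ?]].
  by constructor=> //; split.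
by do 9 (split; first done).
Qed.

Lemma map_src_valid P Q sg pi s : pic_iso_spec P Q sg pi ->
  valid_src w P s -> valid_src w Q (map_src sg s).
Proof.
case=> _ [sg_into _ _] _ _ labels _; case: s => [[t|] j] //= [lt_t lt_j].
by rewrite (labels t lt_t).2; split=> //; apply: sg_into.
Qed.

Lemma pic_iso_id P : pic_iso_spec P P id id.
Proof.
split=> //; try exact: bij_on_id.
by move=> [[t|] j] _; case: (wire P _) => [[?|] ?].
Qed.

Lemma pic_iso_comp P Q P' sg1 pi1 sg2 pi2 : pic_iso_spec P Q sg1 pi1 ->
  pic_iso_spec Q P' sg2 pi2 -> pic_iso_spec P P' (sg2 \o sg1) (pi2 \o pi1).
Proof.
move=> iso1 iso2; case: (iso1) => nT1 tr1 size1 bot1 lab1 wire1.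
case: (iso2) => nT2 tr2 size2 bot2 lab2 wire2.
split; [by rewrite nT1 nT2 | exact: bij_on_comp tr1 tr2 | by rewrite size1 size2 |
       exact: bij_on_comp bot1 bot2 | |].
- case: tr1 => sg1_into _ _ t lt_t /=.
  by have [-> ->] := lab2 _ (sg1_into t lt_t); exact: lab1.
- move=> s vs.
  have -> : map_src (sg2 \o sg1) s = map_src sg2 (map_src sg1 s) by case: s {vs} => [[]].
  rewrite wire2 ?wire1 //; last exact: map_src_valid iso1 vs.
  by case: (wire P s) => [[]].
Qed.

Lemma pic_iso_inv P Q sg pi : is_picture R w P -> pic_iso_spec P Q sg pi ->
  pic_iso_spec Q P (inv_on sg (nT P)) (inv_on pi (size (vbot P))).
Proof.
move=> [tgt_valid _] iso; case: (iso) => nT_eq tr size_eq bot lab wr.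
have [[_ _ sg_onto] [_ _ pi_onto]] := (tr, bot).
split; [by rewrite nT_eq | exact: bij_on_inv | by rewrite size_eq | exact: bij_on_inv | |].
  by move=> _ /sg_onto [t [lt_t <-]]; rewrite (inv_onK tr lt_t); have [-> ->] := lab t lt_t.
have map_srcK s : valid_src w P s -> map_src (inv_on sg (nT P)) (map_src sg s) = s.
  by case: s => [[t|] j] //= [lt_t _]; rewrite (inv_onK tr).
have map_tgtK c : valid_tgt P c ->
    map_tgt (inv_on sg (nT P)) (inv_on pi (size (vbot P))) (map_tgt sg pi c) = c.
  by case: c => [[t|] k] /= => [[lt_t _] | lt_k]; rewrite ?(inv_onK tr) ?(inv_onK bot).
move=> s' vs'; have [s vs ->] : exists2 s, valid_src w P s & s' = map_src sg s.
  case: s' vs' => [[t'|] j] /=; last by exists (None, j).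
  case=> /sg_onto [t [lt_t <-]] lt_j; exists (Some t, j) => //.
  by split; rewrite // -(lab t lt_t).2.
by rewrite map_srcK // wr // map_tgtK //; apply: tgt_valid.
Qed.

Lemma maximal_iso P Q sg pi t : is_picture R w P -> pic_iso_spec P Q sg pi ->
  maximal P t -> maximal Q (sg t).
Proof.
move=> [tgt_valid _] [_ [sg_into _ _] _ _ lab wr] [lt_t max_t].
split=> [|t' [_ [_ [j [k [lt_j wire_j]]]]]]; first exact: sg_into.
have vs : valid_src w P (Some t, j) by split; rewrite // -(lab t lt_t).2.
have := wr _ vs; rewrite /= wire_j; have := tgt_valid _ vs.
case wire_Pj: (wire P (Some t, j)) => [[t0|] k0] //= [lt_t0 _] _.
by apply: (max_t t0); split=> //; split=> //; exists j, k0; case: vs.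
Qed.

Definition kept P T i : bool :=
  ~~ has (fun j => wire P (Some T, j) == (None, i)) (iota 0 (size (tbot P T))).

Definition lift_src T s : contact :=
  match s with (None, i) => (None, i) | (Some t, j) => (Some (bump T t), j) end.

Lemma remove_tr_wire P T s : wire (remove_tr P T) s =
  match wire P (lift_src T s) with
  | (Some t, k) => if t == T then (None, rank (kept P T) (size (vbot P)) + k)
                   else (Some (unbump T t), k)
  | (None, i) => (None, rank (kept P T) i)
  end.
Proof. by rewrite /remove_tr /= count_map. Qed.

Lemma size_remove_tr P T :
  size (vbot (remove_tr P T)) = rank (kept P T) (size (vbot P)) + size (ttop P T).
Proof. by rewrite /remove_tr /= size_cat size_mask ?size_map ?size_iota // count_map. Qed.

Lemma lift_src_valid P T s : T < nT P ->
  valid_src w (remove_tr P T) s -> valid_src w P (lift_src T s).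
Proof. by case: s => [[t|] j] //= lt_T [lt_t lt_j]; split=> //; apply: bump_lt. Qed.

Lemma kept_wire P T s i : is_picture R w P -> T < nT P ->
  valid_src w P (lift_src T s) -> wire P (lift_src T s) = (None, i) -> kept P T i.
Proof.
move=> [_ [wire_inj _]] lt_T vs wire_s; apply/hasP=> [[j]].
rewrite mem_iota => lt_j /eqP wire_Tj.
have := wire_inj (Some T, j) _ (conj lt_T lt_j) vs; rewrite wire_Tj wire_s => /(_ erefl).
by case: s {vs wire_s} => [[t|] j'] //= [] /eqP; rewrite (negbTE (neq_bump T t)).
Qed.

Lemma kept_iso P Q sg pi T i : is_picture R w P -> pic_iso_spec P Q sg pi ->
  T < nT P -> i < size (vbot P) -> kept Q (sg T) (pi i) = kept P T i.
Proof.
move=> [tgt_valid _] [_ _ _ [_ pi_inj _] lab wr] lt_T lt_i.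
rewrite /kept (lab T lt_T).2; congr (~~ _); apply: eq_in_has => j.
rewrite mem_iota => lt_j; have vs : valid_src w P (Some T, j) by [].
rewrite (wr _ vs) /=; have := tgt_valid _ vs.
case: (wire P (Some T, j)) => [[t|] k] //= lt_k.
by apply/eqP/eqP => [[/pi_inj ->] | [->]].
Qed.

Lemma pic_iso_remove P Q sg pi T : is_picture R w P -> pic_iso_spec P Q sg pi -> T < nT P ->
  pic_iso_spec (remove_tr P T) (remove_tr Q (sg T))
    (fun u => unbump (sg T) (sg (bump T u)))
    (compress (size (vbot P)) pi (kept P T) (kept Q (sg T))).
Proof.
move=> picP iso lt_T; have kept_pi := kept_iso picP iso lt_T.
case: (picP) => tgt_valid _; case: (iso) => nT_eq tr _ bot lab wr.
have [sg_into sg_inj _] := tr.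
have sg_eq t : t < nT P -> (sg t == sg T) = (t == T).
  by move=> lt_t; apply/eqP/eqP => [/sg_inj -> | ->].
have bump_neq t : (bump T t == T) = false by rewrite eq_sym (negbTE (neq_bump T t)).
have lt_bump t : t < (nT P).-1 -> bump T t < nT P by apply: bump_lt.
have rank_kept := rank_bij bot kept_pi.
split.
- by rewrite /= nT_eq.
- exact: bij_on_unbump.
- by rewrite !size_remove_tr (lab T lt_T).1 rank_kept.
- by rewrite !size_remove_tr (lab T lt_T).1; apply: bij_on_compress.
- move=> t lt_t /=; rewrite unbumpK ?inE ?sg_eq ?bump_neq ?lt_bump //.
  exact/lab/lt_bump.
move=> s vs; have vs0 := lift_src_valid lt_T vs.
have lift_map : lift_src (sg T) (map_src (fun u => unbump (sg T) (sg (bump T u))) s)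
    = map_src sg (lift_src T s).
  case: s vs {vs0} => [[t|] j] //= [lt_t _].
  by rewrite unbumpK // inE sg_eq ?bump_neq ?lt_bump.
rewrite !remove_tr_wire lift_map wr //.
have := kept_wire picP lt_T vs0; have := tgt_valid _ vs0.
case: (wire P (lift_src T s)) => [[t|] k] /=.
- case=> lt_t _ _; rewrite sg_eq //; case: eqVneq => [_ | neq_tT].
    by rewrite /= compress_high ?leq_addr // rank_kept.
  by rewrite /= unbumpK // inE.
- move=> lt_k /(_ k erefl) kept_k.
  by rewrite /compress rank_lt // select_rank.
Qed.

End PictureIsomorphisms.

Lemma square_side_is_removal S (R : seq S -> seq S -> Prop) (w : seq S)
    (E F : pic S * nat) P W1 W2 :
  is_edge R w E -> is_square R w P W1 W2 ->
  edge_equiv w E (P, W1) -> edge_equiv w F (remove_tr P W2, unbump W2 W1) ->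
  exists T, maximal E.1 T /\ T <> E.2 /\
    edge_equiv w F (remove_tr E.1 T, unbump T E.2).
Proof.
move=> [picE [_ [lt_E _]]] [picP [_ [[lt_W1 _] [max_W2 neq_W12]]]].
move=> [sg [pi [/pic_isoP isoE /= sgE]]] [sg' [pi' [/pic_isoP isoF /= sgF]]].
have isoP := pic_iso_inv picE isoE; have [_ tau_inj _] := iso_tr isoP.
have tau_W1 : inv_on sg (nT E.1) W1 = E.2 by rewrite -sgE (inv_onK (iso_tr isoE)).
exists (inv_on sg (nT E.1) W2); split; first exact: maximal_iso picP isoP max_W2.
have lt_W2 := max_W2.1.
split=> [tau_W2 | ].
  by apply: neq_W12; apply: tau_inj; rewrite ?tau_W1 ?tau_W2.
have isoF_rem := pic_iso_comp isoF (pic_iso_remove picP isoP lt_W2).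
do 2 eexists; split; first exact/pic_isoP/isoF_rem.
by rewrite /= sgF unbumpKcond; case: eqP => // _; rewrite add0n tau_W1.
Qed.

Lemma edge_equiv_refl S (w : seq S) (E : pic S * nat) : edge_equiv w E E.
Proof. by exists id, id; split=> //; apply/pic_isoP/pic_iso_id. Qed.

Lemma removal_square S (R : seq S -> seq S -> Prop) (w : seq S) (E : pic S * nat) T :
  is_edge R w E -> maximal E.1 T -> T <> E.2 -> is_square R w E.1 E.2 T.
Proof. by move=> [picE [redE maxE]] maxT neq; do 4 split=> //; apply: nesym. Qed.

Theorem lemma4p1 (S : Type) (R : seq S -> seq S -> Prop)
  (HR_nonempty : forall u v, R u v -> u <> [::] /\ v <> [::])
  (HR_nontriv : forall u, ~ R u u)
  (w : seq S) (Hw : w <> [::])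
  (E' E'' : pic S * nat)
  (HE' : is_edge R w E') (HE'' : is_edge R w E'') :
  sq_equiv R w E' E'' <->
  ((exists T, maximal E'.1 T /\ T <> E'.2 /\
      edge_equiv w E'' (remove_tr E'.1 T, unbump T E'.2)) \/
   (exists T, maximal E''.1 T /\ T <> E''.2 /\
      edge_equiv w E' (remove_tr E''.1 T, unbump T E''.2))).
Proof.
split.
- case=> P [W1 [W2 [square [[side1 side2] | [side1 side2]]]]].
  + by left; apply: square_side_is_removal HE' square side1 side2.
  + by right; apply: square_side_is_removal HE'' square side1 side2.
- case=> [[T [maxT [neqT removal]]] | [T [maxT [neqT removal]]]].
  + exists E'.1, E'.2, T; split; first exact: removal_square.
    by left; split; first exact: edge_equiv_refl.
  + exists E''.1, E''.2, T; split; first exact: removal_square.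
    by right; split; first exact: edge_equiv_refl.
Qed.
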